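(* Let $G_1,G_2$ be regular (finite, simple, undirected) graphs and let $G$ be a graph (without loops, unweighted, possibly directed) with $2$ vertices. Then \[ E(G[G_1,G_2])\ge E(G)+E(G_1)+E(G_2). \]
   Context: The energy $E(H)$ of a (di)graph $H$ is the sum of the absolute values of the eigenvalues (with multiplicity) of its adjacency matrix. For a graph $G$ on vertices $v_1,v_2$ with adjacency matrix $(a_{ij})$, the joined union $G[G_1,G_2]$ has adjacency matrix $\begin{pmatrix} A_1 & a_{12}\mathbf 1\\ a_{21}\mathbf 1 & A_2\end{pmatrix}$, where $A_i$ is the adjacency matrix of $G_i$ and $a_{ij}\mathbf 1$ is the all-$a_{ij}$ matrix of appropriate size; i.e. every vertex of $G_i$ is joined to every vertex of $G_j$ whenever $v_i$ is adjacent to $v_j$ in $G$. *)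

From HB Require Import structures.
From mathcomp Require Import all_boot all_order all_algebra all_field.
Set Implicit Arguments. Unset Strict Implicit. Unset Printing Implicit Defensive.
Import Order.TTheory GRing.Theory Num.Theory.
Local Open Scope ring_scope.

(* Eigenvalues (with multiplicity) of a complex square matrix: the roots of its
   characteristic polynomial (which is monic, so lead_coef = 1). *)
Definition spectrum (n : nat) (A : 'M[algC]_n) : seq algC :=
  sval (closed_field_poly_normal (char_poly A)).

Definition energy (n : nat) (A : 'M[algC]_n) : algC :=
  \sum_(z <- spectrum A) `|z|.

Definition adj (n : nat) (e : rel 'I_n) : 'M[algC]_n :=
  \matrix_(i, j) (e i j)%:R.

Definition simple_graph (n : nat) (e : rel 'I_n) : Prop :=
  symmetric e /\ irreflexive e.

Definition regular (n : nat) (e : rel 'I_n) : Prop :=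
  exists k : nat, forall i : 'I_n, #|[set j | e i j]| = k.

Definition joined_union (e : rel 'I_2) (n1 n2 : nat)
  (e1 : rel 'I_n1) (e2 : rel 'I_n2) : 'M[algC]_(n1 + n2) :=
  block_mx (adj e1) (const_mx (e ord0 ord_max)%:R)
           (const_mx (e ord_max ord0)%:R) (adj e2).

From HB Require Import structures.
From mathcomp Require Import all_boot all_order all_algebra all_field.
From mathcomp Require Import ring zify.
Import Order.TTheory GRing.Theory Num.Theory.
Local Open Scope ring_scope.

(* The all-ones vector is an eigenvector, for the degree r, of the adjacency
   matrix A of an r-regular graph. In the basis (1, e_2, ..., e_n) the matrix A
   becomes block upper triangular with r in the corner, so the characteristic
   polynomial of A is (X - r) times that of a deflated matrix. Deflating both
   parts of the joined union at once leaves instead the quotient matrix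
   Q = [[r1, a n2], [b n1, r2]] (a, b the arcs of G), hence
   E(G[G1,G2]) - E(G1) - E(G2) = E(Q) - r1 - r2. Since r_i < n_i, the
   eigenvalues of Q satisfy |l1| + |l2| >= |l1 + l2| = r1 + r2, and when G has
   both arcs, so that E(G) = 2, also
   |l1| + |l2| >= |l1 - l2| = sqrt((r1 - r2)^2 + 4 n1 n2) >= r1 + r2 + 2. *)

Lemma mul_const_mx (R : pzSemiRingType) m n p (a b : R) :
  (const_mx a : 'M_(m, n)) *m (const_mx b : 'M_(n, p)) = const_mx (a * b *+ n).
Proof.
apply/matrixP => i j; rewrite !mxE.
by under eq_bigr do rewrite !mxE; rewrite sumr_const card_ord.
Qed.

Lemma mxtrace_mx2 (R : comPzRingType) (A : 'M[R]_2) : \tr A = A 0 0 + A 1 1.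
Proof.
rewrite /mxtrace !big_ord_recl big_ord0 addr0.
by congr (A _ _ + A _ _); apply: val_inj.
Qed.

Lemma det_mx2 (R : comPzRingType) (A : 'M[R]_2) :
  \det A = A 0 0 * A 1 1 - A 0 1 * A 1 0.
Proof.
rewrite (expand_det_row _ 0) !big_ord_recl big_ord0 addr0 /cofactor !det_mx11.
rewrite !mxE /= expr0 expr1 mul1r mulN1r mulrN.
by congr (A _ _ * A _ _ - A _ _ * A _ _); apply: val_inj.
Qed.

Lemma mxtrace_block_scalar2 (R : comPzRingType) (a b c d : R) :
  \tr (block_mx a%:M b%:M c%:M d%:M : 'M_(1 + 1)) = a + d.
Proof. by rewrite mxtrace_block !mxtrace_scalar. Qed.

Lemma det_block_scalar2 (R : comPzRingType) (a b c d : R) :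
  \det (block_mx a%:M b%:M c%:M d%:M : 'M_(1 + 1)) = a * d - b * c.
Proof.
have l0 : (0 : 'I_(1 + 1)) = lshift 1 0 by apply: val_inj.
have r1 : (1 : 'I_(1 + 1)) = rshift 1 0 by apply: val_inj.
rewrite det_mx2 l0 r1 (@block_mxEul _ 1 1 1 1) (@block_mxEur _ 1 1 1 1).
by rewrite (@block_mxEdl _ 1 1 1 1) (@block_mxEdr _ 1 1 1 1) !mxE !mulr1n.
Qed.

Lemma char_poly_ublock {R : comNzRingType} {m n} (A : 'M[R]_m) (B : 'M_(m, n))
    (D : 'M_n) :
  char_poly (block_mx A B 0 D) = char_poly A * char_poly D.
Proof.
rewrite /char_poly /char_poly_mx map_block_mx /= map_mx0 scalar_mx_block.
by rewrite opp_block_mx add_block_mx oppr0 addr0 det_ublock.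
Qed.

Lemma char_poly_similar {R : comUnitRingType} {m n} (eq_mn : m = n)
    (A : 'M[R]_m) (S : 'M_(m, n)) (S' : 'M_(n, m)) :
  S' *m S = 1%:M -> char_poly (S' *m A *m S) = char_poly A.
Proof.
case: n / eq_mn S S' => S S' S'S.
rewrite /char_poly /char_poly_mx !map_mxM.
set P := map_mx polyC S; set P' := map_mx polyC S'.
have P'P : P' *m P = 1%:M by rewrite -map_mxM S'S map_mx1.
have PP' : P *m P' = 1%:M by rewrite -map_mxM (mulmx1C S'S) map_mx1.
have <- : P' *m ('X%:M - map_mx polyC A) *m P =
          'X%:M - P' *m map_mx polyC A *m P.
  by rewrite mulmxBr mulmxBl mul_mx_scalar -scalemxAl P'P scalemx1.
by rewrite !det_mulmx mulrC mulrA -det_mulmx PP' det1 mul1r.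
Qed.

Section Deflation.
Context {R : comUnitRingType} {k : nat}.

Definition tail_incl : 'M[R]_(1 + k, k) := col_mx 0 1%:M.
Definition head_row : 'rV[R]_(1 + k) := row_mx 1%:M 0.
Definition tail_diff : 'M[R]_(k, 1 + k) := row_mx (const_mx (-1)) 1%:M.

Definition deflate (A : 'M[R]_(1 + k)) : 'M[R]_k := tail_diff *m A *m tail_incl.

Lemma head_row_const n (c : R) :
  head_row *m (const_mx c : 'M_(1 + k, n)) = const_mx c.
Proof.
rewrite /head_row -col_mx_const mul_row_col mul0mx addr0 mul1mx.
by apply/matrixP => i j; rewrite !ord1 !mxE.
Qed.

Lemma head_row_ones : head_row *m const_mx 1 = 1%:M.
Proof. by rewrite head_row_const [const_mx 1]mx11_scalar mxE. Qed.

Lemma head_row_tail : head_row *m tail_incl = 0.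
Proof. by rewrite mul_row_col mul0mx mulmx0 addr0. Qed.

Lemma tail_diff_const n (a : R) : tail_diff *m (const_mx a : 'M_(1 + k, n)) = 0.
Proof.
rewrite /tail_diff -col_mx_const mul_row_col mul1mx mul_const_mx.
by apply/matrixP => i j; rewrite !mxE mulN1r addNr.
Qed.

Lemma tail_diff_tail : tail_diff *m tail_incl = 1%:M.
Proof. by rewrite mul_row_col mulmx0 add0r mul1mx. Qed.

Lemma deflation_basisK :
  col_mx head_row tail_diff *m row_mx (const_mx 1) tail_incl = 1%:M.
Proof.
rewrite mul_col_row head_row_ones head_row_tail tail_diff_const.
by rewrite tail_diff_tail -scalar_mx_block.
Qed.

Lemma char_poly_deflate {A : 'M[R]_(1 + k)} {r : R} :
  A *m const_mx 1 = r *: (const_mx 1 : 'cV_(1 + k)) ->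
  char_poly A = char_poly (r%:M : 'M_1) * char_poly (deflate A).
Proof.
move=> A1; rewrite -(char_poly_similar (erefl _) A _ _ deflation_basisK).
rewrite mul_col_mx mul_col_row -!mulmxA A1 -!scalemxAr head_row_ones.
by rewrite tail_diff_const scaler0 scalemx1 char_poly_ublock !mulmxA.
Qed.

End Deflation.

Section JoinedBlocks.
Context {R : comUnitRingType} {k1 k2 : nat}.

Definition join_basis : 'M[R]_((1 + k1) + (1 + k2), (1 + 1) + (k1 + k2)) :=
  block_mx (row_mx (const_mx 1) 0) (row_mx tail_incl 0)
           (row_mx 0 (const_mx 1)) (row_mx 0 tail_incl).

Definition join_basis_inv : 'M[R]_((1 + 1) + (k1 + k2), (1 + k1) + (1 + k2)) :=
  block_mx (col_mx head_row 0) (col_mx 0 head_row)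
           (col_mx tail_diff 0) (col_mx 0 tail_diff).

Lemma join_basisK : join_basis_inv *m join_basis = 1%:M.
Proof.
rewrite mulmx_block !mul_col_row !head_row_ones !head_row_tail !tail_diff_const.
rewrite !tail_diff_tail !mulmx0 !mul0mx !add_block_mx !addr0 !add0r.
by rewrite -!scalar_mx_block !block_mx0 -scalar_mx_block.
Qed.

Lemma char_poly_join_regular (a b : R) {A1 : 'M[R]_(1 + k1)}
    {A2 : 'M[R]_(1 + k2)} {r1 r2 : R} :
  A1 *m const_mx 1 = r1 *: (const_mx 1 : 'cV_(1 + k1)) ->
  A2 *m const_mx 1 = r2 *: (const_mx 1 : 'cV_(1 + k2)) ->
  char_poly (block_mx A1 (const_mx a) (const_mx b) A2) =
  char_poly (block_mx r1%:M (a *+ (1 + k2))%:M (b *+ (1 + k1))%:M r2%:M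
               : 'M_(1 + 1))
  * char_poly (block_mx (deflate A1) 0 0 (deflate A2)).
Proof.
move=> A1r A2r; have eq_dim : ((1 + k1) + (1 + k2) = (1 + 1) + (k1 + k2))%N.
  by rewrite addnACA.
rewrite -(char_poly_similar eq_dim _ _ _ join_basisK).
rewrite !mulmx_block !mul_col_mx !mul0mx !add_col_mx !addr0 !add0r !mul_col_row.
rewrite !mulmx0 -!mulmxA A1r A2r !mul_const_mx !mulr1 -!scalemxAr.
rewrite !head_row_ones !head_row_const !tail_diff_const !scaler0 !mulmxA.
rewrite !tail_diff_const !mul0mx.
rewrite !add_block_mx !addr0 !add0r block_mx0 [LHS]char_poly_ublock !scalemx1.
by rewrite [const_mx (a *+ _)]mx11_scalar [const_mx (b *+ _)]mx11_scalar !mxE.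
Qed.

End JoinedBlocks.

Lemma char_poly_spectrum {n} (A : 'M[algC]_n) :
  char_poly A = \prod_(z <- spectrum A) ('X - z%:P).
Proof.
rewrite /spectrum; case: (closed_field_poly_normal _) => s /= ->.
by rewrite (monicP (char_poly_monic A)) scale1r.
Qed.

Lemma energy_char_poly {n} (A : 'M[algC]_n) (s : seq algC) :
  char_poly A = \prod_(z <- s) ('X - z%:P) -> energy A = \sum_(z <- s) `|z|.
Proof.
move=> charA; apply: perm_big; apply: prod_XsubC_eq.
by rewrite -char_poly_spectrum.
Qed.

Lemma energy_char_polyM {m n p} {A : 'M[algC]_m} {B : 'M_n} {C : 'M_p} :
  char_poly A = char_poly B * char_poly C -> energy A = energy B + energy C.
Proof.
rewrite [char_poly B]char_poly_spectrum [char_poly C]char_poly_spectrum.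
rewrite -big_cat.
by move=> /energy_char_poly ->; rewrite big_cat.
Qed.

Lemma energy_scalar1 (r : algC) : energy (r%:M : 'M_1) = `|r|.
Proof.
by rewrite (@energy_char_poly _ _ [:: r]) big_seq1 // /char_poly det_mx11 !mxE.
Qed.

Lemma energy_mx2 (A : 'M[algC]_2) : exists l1 l2 : algC,
  [/\ energy A = `|l1| + `|l2|, l1 + l2 = \tr A & l1 * l2 = \det A].
Proof.
have charA := char_poly_spectrum A.
have size_spec : size (spectrum A) = 2%N.
  by have := size_char_poly A; rewrite charA size_prod_XsubC => -[].
move: charA size_spec; case: (spectrum A) => [|l1 [|l2 []]] // charA _.
rewrite !big_cons big_nil mulr1 in charA.
exists l1, l2; split.
- rewrite (@energy_char_poly _ _ [:: l1; l2]) !big_cons big_nil ?addr0 //.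
  by rewrite mulr1.
- apply: oppr_inj; rewrite -(char_poly_trace A) // charA mulrBl coefB coefXM.
  by rewrite coefCM !coefB !coefX !coefC /=; ring.
- have -> : \det A = (-1) ^+ 2 * \det A by rewrite sqrrN expr1n mul1r.
  rewrite -char_poly_det charA mulrBl coefB coefXM.
  by rewrite coefCM !coefB !coefX !coefC /=; ring.
Qed.

Lemma adj_regular_ones {n} {e : rel 'I_n} {r : nat} :
  (forall i, #|[set j | e i j]| = r) ->
  adj e *m const_mx 1 = r%:R *: (const_mx 1 : 'cV_n).
Proof.
move=> deg_e; apply/matrixP => i j; rewrite !mxE mulr1 -(deg_e i).
under eq_bigr do rewrite !mxE mulr1.
rewrite -sum1_card natr_sum [RHS]big_mkcond; apply: eq_bigr => l _.
by rewrite inE; case: (e i l).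
Qed.

Lemma card_adj_lt n (e : rel 'I_n) (i : 'I_n) :
  irreflexive e -> (#|[set j | e i j]| < n)%N.
Proof.
move=> irr_e; rewrite -[n in (_ < n)%N]card_ord; apply/proper_card/properP.
split; first exact/subsetP.
by exists i; rewrite // inE irr_e.
Qed.

Lemma energy_adj2 (e : rel 'I_2) : irreflexive e ->
  energy (adj e) = (e ord0 ord_max && e ord_max ord0)%:R *+ 2.
Proof.
move=> irr_e; have [l1 [l2 [-> tr_l det_l]]] := energy_mx2 (adj e).
have o0 : (0 : 'I_2) = ord0 by apply: val_inj.
have o1 : (1 : 'I_2) = ord_max by apply: val_inj.
rewrite mxtrace_mx2 det_mx2 !mxE o0 o1 !irr_e add0r mul0r sub0r in tr_l det_l.
have l2E : l2 = - l1 by apply/eqP; rewrite -subr_eq0 opprK addrC tr_l.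
rewrite l2E mulrN in det_l; rewrite l2E normrN -mulr2n; congr (_ *+ 2).
have sqr_l1 : `|l1| ^+ 2 = (e ord0 ord_max && e ord_max ord0)%:R.
  rewrite -normrX expr2 -[l1 * l1]opprK det_l opprK.
  case: (e _ _) (e _ _) => [] [];
    by rewrite /= ?(mulr1, mul0r, mulr0) ?normr0 ?normr_nat.
case: (_ && _) sqr_l1 => /eqP; rewrite /= ?mulr1n ?mulr0n.
  by rewrite sqrp_eq1 // => /eqP.
by rewrite sqrf_eq0 => /eqP.
Qed.

Lemma energy_quotient_ge (r1 r2 n1 n2 : nat) (a b : bool) :
  (r1 < n1)%N -> (r2 < n2)%N ->
  (a && b)%:R *+ 2 + r1%:R + r2%:R <=
    energy (block_mx r1%:R%:M (a%:R *+ n2)%:M (b%:R *+ n1)%:M r2%:R%:M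
              : 'M[algC]_(1 + 1)).
Proof.
move=> lt_r1 lt_r2.
have [l1 [l2 [-> ]]] := energy_mx2 (block_mx r1%:R%:M (a%:R *+ n2)%:M
                                 (b%:R *+ n1)%:M r2%:R%:M : 'M_(1 + 1)).
rewrite mxtrace_block_scalar2 det_block_scalar2 => tr_l det_l.
have [/andP [a1 b1] | _] := boolP (a && b); last first.
  rewrite mul0rn add0r (le_trans _ (ler_normD l1 l2)) //.
  by rewrite tr_l -natrD normr_nat.
rewrite a1 b1 /= mulr1n in det_l *.
have disc : (l1 - l2) ^+ 2 = ((r1 + r2) ^ 2 + 4 * n1 * n2 - 4 * r1 * r2)%N%:R.
  have -> : (l1 - l2) ^+ 2 = (l1 + l2) ^+ 2 - 4%:R * (l1 * l2) by ring.
  rewrite tr_l det_l natrB; last by nia.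
  by rewrite !natrD !natrM !natrD; ring.
have -> : 2 + r1%:R + r2%:R = (r1 + r2 + 2)%N%:R :> algC.
  by rewrite !natrD; ring.
apply: le_trans (ler_normB l1 l2).
rewrite -(ler_pXn2r (n := 2)) ?nnegrE ?normr_ge0 ?ler0n //.
by rewrite -normrX disc normr_nat -natrX ler_nat; nia.
Qed.

Theorem mainTheorem11 (n1 n2 : nat) (hn1 : (0 < n1)%N) (hn2 : (0 < n2)%N)
  (e1 : rel 'I_n1) (e2 : rel 'I_n2) (e : rel 'I_2)
  (hs1 : simple_graph e1) (hr1 : regular e1)
  (hs2 : simple_graph e2) (hr2 : regular e2)
  (he : irreflexive e) :
  energy (adj e) + energy (adj e1) + energy (adj e2)
    <= energy (joined_union e e1 e2).
Proof.
case: n1 hn1 e1 hs1 hr1 => // k1 _ e1 [_ irr1] [r1 deg1].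
case: n2 hn2 e2 hs2 hr2 => // k2 _ e2 [_ irr2] [r2 deg2].
have lt_r1 : (r1 < k1.+1)%N by rewrite -(deg1 ord0) card_adj_lt.
have lt_r2 : (r2 < k2.+1)%N by rewrite -(deg2 ord0) card_adj_lt.
have A1r := adj_regular_ones deg1; have A2r := adj_regular_ones deg2.
rewrite /joined_union (energy_char_polyM (char_poly_join_regular _ _ A1r A2r)).
rewrite (energy_char_polyM (char_poly_ublock _ _ _)).
rewrite (energy_char_polyM (char_poly_deflate A1r)).
rewrite (energy_char_polyM (char_poly_deflate A2r)).
rewrite !energy_scalar1 !normr_nat energy_adj2 //.
set d1 := energy (deflate _); set d2 := energy (deflate _).
rewrite -!addrA [d1 + (_ + d2)]addrCA !addrA !lerD2r.
exact: energy_quotient_ge.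
Qed.
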